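(* Under the Setting and Algorithm in the context, suppose $\{\gamma_k\}$, $\{\eta_k\}$ and $s$ satisfy $$\frac{N-s+1}{2}\min_{k\in\mathcal N}\gamma_k\eta_k>D_{\mathcal X}^2+\frac12\sum_{k\in\mathcal B}\gamma_k^2L_f^2+\frac12\sum_{k\in\mathcal N}\gamma_k^2L_{g,\mathcal X}^2.$$ Then $$f(\bar x_{N,s})-f(x^* )\le\frac{2D_{\mathcal X}^2+\sum_{k\in\mathcal B}\gamma_k^2L_f^2+\sum_{k\in\mathcal N}\gamma_k^2L_{g,\mathcal X}^2}{(N-s+1)\min_{k\in\mathcal B}\gamma_k}$$ and $$G(\bar x_{N,s})\le\frac{\sum_{k\in\mathcal B}\gamma_k(\eta_k+\varepsilon_k)}{\sum_{k\in\mathcal B}\gamma_k}.$$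
   Context: Setting. $\mathcal X\subset\mathbb R^n$ is convex and compact; $f:\mathcal X\to\mathbb R$ is convex and $L_f$-Lipschitz; $\Delta\subset\mathbb R^d$ is compact; $g:\mathcal X\times\Delta\to\mathbb R$ is such that for every $\delta\in\Delta$, $x\mapsto g(x,\delta)$ is convex and $L_{g,\mathcal X}$-Lipschitz, and for every $x\in\mathcal X$, $\delta\mapsto g(x,\delta)$ is $L_{g,\Delta}$-Lipschitz. Let $G(x):=\max_{\delta\in\Delta}g(x,\delta)$ and assume the problem $\min_{x\in\mathcal X}\{f(x):G(x)\le0\}$ has an optimal solution $x^*$. Norms are Euclidean. $f'(x)$ denotes a subgradient of $f$ at $x$ and $g'(x,\delta)$ a subgradient of $g(\cdot,\delta)$ at $x$. Let $\omega_{\mathcal X}:\mathcal X\to\mathbb R$ be continuously differentiable and $1$-strongly convex; $V(x,z):=\omega_{\mathcal X}(z)-\omega_{\mathcal X}(x)-\langle\nabla\omega_{\mathcal X}(x),z-x\rangle$; prox-mapping $P_{x,\mathcal X}(y):=\arg\min_{z\in\mathcal X}\{\langle y,z\rangle+V(x,z)\}$; $D_{\mathcal X}:=\sqrt{\max_{x,z\in\mathcal X}V(x,z)}$. Algorithm (inexact CSA). Inputs: $N\ge1$, $x_1\in\mathcal X$, tolerances $\eta_k>0$, step-sizes $\gamma_k>0$. For $k=1,\dots,N$: choose some $\delta_k\in\Delta$ (an approximate maximizer of $g(x_k,\cdot)$); set $h_k=f'(x_k)$ if $g(x_k,\delta_k)\le\eta_k$ and $h_k=g'(x_k,\delta_k)$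 otherwise; set $x_{k+1}=P_{x_k,\mathcal X}(\gamma_kh_k)$. For $1\le s\le N$ let $I=\{s,\dots,N\}$, $\mathcal B:=\{k\in I: g(x_k,\delta_k)\le\eta_k\}$, $\mathcal N:=I\setminus\mathcal B$, and output $\bar x_{N,s}:=\sum_{k\in\mathcal B}\gamma_kx_k/\sum_{k\in\mathcal B}\gamma_k$. The cut-generation errors are $\varepsilon_k:=G(x_k)-g(x_k,\delta_k)\ge0$. (The minimum over an empty set is $+\infty$.) *)

(* Stdlib Reals. Vectors of R^n are represented as functions nat -> R
   that vanish at indices >= n. *)
From Stdlib Require Import Reals Lra List.
Open Scope R_scope.

Definition Vec := nat -> R.

Definition inRn (n : nat) (v : Vec) : Prop := forall i, (n <= i)%nat -> v i = 0.

Definition vadd (u v : Vec) : Vec := fun i => u i + v i.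
Definition vsub (u v : Vec) : Vec := fun i => u i - v i.
Definition vscal (a : R) (v : Vec) : Vec := fun i => a * v i.

Fixpoint inner (n : nat) (u v : Vec) : R :=
  match n with O => 0 | S m => inner m u v + u m * v m end.
Definition vnorm (n : nat) (v : Vec) : R := sqrt (inner n v v).

(* Compactness of a subset of R^n: closed and bounded (Heine-Borel). *)
Definition compact_set (n : nat) (S : Vec -> Prop) : Prop :=
  (forall v, S v -> inRn n v) /\
  (exists M, forall v, S v -> vnorm n v <= M) /\
  (forall (u : nat -> Vec) (v : Vec), inRn n v -> (forall m, S (u m)) ->
       Un_cv (fun m => vnorm n (vsub (u m) v)) 0 -> S v).

Definition convex_set (S : Vec -> Prop) : Prop :=
  forall x y t, S x -> S y -> 0 <= t <= 1 -> S (vadd (vscal t x) (vscal (1 - t) y)).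

Definition convex_on (S : Vec -> Prop) (h : Vec -> R) : Prop :=
  forall x y t, S x -> S y -> 0 <= t <= 1 ->
    h (vadd (vscal t x) (vscal (1 - t) y)) <= t * h x + (1 - t) * h y.

Definition lipschitz_on (n : nat) (S : Vec -> Prop) (L : R) (h : Vec -> R) : Prop :=
  forall x y, S x -> S y -> Rabs (h x - h y) <= L * vnorm n (vsub x y).

Definition subgrad (n : nat) (S : Vec -> Prop) (phi : Vec -> R) (x h : Vec) : Prop :=
  forall z, S z -> phi z >= phi x + inner n h (vsub z x).

Definition C1_on (n : nat) (S : Vec -> Prop) (omega : Vec -> R) (domega : Vec -> Vec) : Prop :=
  (forall x, S x -> forall eps, eps > 0 -> exists del, del > 0 /\
     forall z, S z -> vnorm n (vsub z x) < del ->
       Rabs (omega z - omega x - inner n (domega x) (vsub z x)) <= eps * vnorm n (vsub z x)) /\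
  (forall x, S x -> forall eps, eps > 0 -> exists del, del > 0 /\
     forall z, S z -> vnorm n (vsub z x) < del -> vnorm n (vsub (domega z) (domega x)) < eps).

Definition strongly_convex1 (n : nat) (S : Vec -> Prop) (omega : Vec -> R) : Prop :=
  forall x y t, S x -> S y -> 0 <= t <= 1 ->
    omega (vadd (vscal t x) (vscal (1 - t) y)) <=
      t * omega x + (1 - t) * omega y - t * (1 - t) / 2 * (vnorm n (vsub x y))^2.

Definition Breg (n : nat) (omega : Vec -> R) (domega : Vec -> Vec) (x z : Vec) : R :=
  omega z - omega x - inner n (domega x) (vsub z x).

Definition is_prox (n : nat) (S : Vec -> Prop) (omega : Vec -> R) (domega : Vec -> Vec)
  (x y p : Vec) : Prop :=
  S p /\ forall z, S z ->
    inner n y p + Breg n omega domega x p <= inner n y z + Breg n omega domega x z.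

Definition is_max_on {A : Type} (S : A -> Prop) (phi : A -> R) (m : R) : Prop :=
  (exists d, S d /\ phi d = m) /\ (forall d, S d -> phi d <= m).

Definition sumR (l : list nat) (a : nat -> R) : R := fold_right (fun k acc => a k + acc) 0 l.

(* minimum over a finite list of indices; None stands for +infinity (empty list) *)
Definition ominR (l : list nat) (a : nat -> R) : option R :=
  fold_right (fun k acc => match acc with
                           | None => Some (a k)
                           | Some m => Some (Rmin (a k) m) end) None l.

Definition Rleb (a b : R) : bool := if Rle_dec a b then true else false.

Definition Iset (s N : nat) : list nat := seq s (N - s + 1).

(* The proof follows the classical mirror-descent analysis.
   1. Bregman geometry: strong convexity gives V(x,p) >= |p - x|^2/2, and the
      optimality condition of the prox-mapping gives the three-point
      inequality; together they bound one step:
        gamma <h, x - z> <= V(x,z) - V(p,z) + gamma^2 |h|^2 / 2,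
      which telescopes over the steps s..N into a regret bound of size RHS.
   2. Every objective step (k in B) contributes at least its weighted gap
      gamma_k (f(x_k) - f(xstar)), and every constraint step (k in N) at least
      gamma_k eta_k, since g(x_k, delta_k) > eta_k while g(xstar, .) <= 0.
   3. The step-size condition makes the constraint steps' contribution exceed
      RHS as soon as they form more than half of {s..N}.  Hence B is
      nonempty, and either B holds half of the steps or the objective gaps
      sum to a negative number; both give the objective bound after Jensen.
   4. The constraint bound is Jensen applied to g(., dstar), where dstar
      maximizes g(xbar, .), plus g(x_k, dstar) <= G(x_k) = g(x_k, delta_k) + eps_k. *)

From Stdlib Require Import Reals List Lra Lia FunctionalExtensionality.
Open Scope R_scope.

Lemma inner_sub_l n u v w : inner n (vsub u v) w = inner n u w - inner n v w.
Proof. induction n; simpl; [ring | rewrite IHn; unfold vsub; ring]. Qed.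

Lemma inner_sub_r n u v w : inner n w (vsub u v) = inner n w u - inner n w v.
Proof. induction n; simpl; [ring | rewrite IHn; unfold vsub; ring]. Qed.

Lemma inner_add_r n u v w : inner n w (vadd u v) = inner n w u + inner n w v.
Proof. induction n; simpl; [ring | rewrite IHn; unfold vadd; ring]. Qed.

Lemma inner_scal_l n a u v : inner n (vscal a u) v = a * inner n u v.
Proof. induction n; simpl; [ring | rewrite IHn; unfold vscal; ring]. Qed.

Lemma inner_scal_r n a u v : inner n u (vscal a v) = a * inner n u v.
Proof. induction n; simpl; [ring | rewrite IHn; unfold vscal; ring]. Qed.

Lemma inner_comm n u v : inner n u v = inner n v u.
Proof. induction n; simpl; [ring | rewrite IHn; ring]. Qed.

Lemma inner_pos n v : 0 <= inner n v v.
Proof. induction n; simpl; [lra | nra]. Qed.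

Lemma vnorm_sq n v : vnorm n v ^ 2 = inner n v v.
Proof. unfold vnorm; rewrite <- Rsqr_pow2; apply Rsqr_sqrt, inner_pos. Qed.

Lemma vnorm_scal n t v : 0 <= t -> vnorm n (vscal t v) = t * vnorm n v.
Proof.
  intros Ht; unfold vnorm.
  rewrite inner_scal_l, inner_scal_r, <- Rmult_assoc, sqrt_mult by (nra || apply inner_pos).
  now rewrite sqrt_square.
Qed.

Lemma vnorm_nonneg n v : 0 <= vnorm n v.
Proof. apply sqrt_pos. Qed.

Lemma vnorm_sub_comm n a b : vnorm n (vsub a b) = vnorm n (vsub b a).
Proof.
  unfold vnorm; f_equal.
  rewrite !inner_sub_l, !inner_sub_r, (inner_comm n a b); ring.
Qed.

Lemma inner_young n u v : inner n u v <= (inner n u u + inner n v v) / 2.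
Proof.
  pose proof (inner_pos n (vsub u v)) as H.
  rewrite !inner_sub_l, !inner_sub_r, (inner_comm n v u) in H; lra.
Qed.

Lemma ge_of_forall_eps a b c :
  0 <= c -> (forall eps, eps > 0 -> a >= b - eps * c) -> a >= b.
Proof.
  intros Hc H; destruct (Rge_or_lt a b) as [| Hlt]; auto.
  set (e := (b - a) / (2 * (c + 1))).
  assert (He : e > 0) by (unfold e; apply Rdiv_lt_0_compat; lra).
  assert (E : e * (c + 1) = (b - a) / 2) by (unfold e; field; lra).
  specialize (H e He); nra.
Qed.

Lemma Rabs_le_bounds y z : Rabs y <= z -> - z <= y <= z.
Proof. intros H; pose proof (Rle_abs y); pose proof (Rle_abs (- y)); rewrite Rabs_Ropp in *; lra. Qed.

(** Both Bregman estimates below are limits of this expansion as [t -> 0]. *)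
Lemma C1_along_segment n X omega domega x z eps T :
  convex_set X -> C1_on n X omega domega -> X x -> X z -> eps > 0 -> T > 0 ->
  exists t, 0 < t <= 1 /\ t <= T /\
    X (vadd (vscal t z) (vscal (1 - t) x)) /\
    Rabs (omega (vadd (vscal t z) (vscal (1 - t) x)) - omega x
          - t * inner n (domega x) (vsub z x)) <= eps * (t * vnorm n (vsub z x)).
Proof.
  intros HXc [Hdiff _] Hx Hz Heps HT.
  set (M := vnorm n (vsub z x)).
  assert (HM : 0 <= M) by apply vnorm_nonneg.
  destruct (Hdiff x Hx eps Heps) as [del [Hdel Hclose]].
  assert (Hq : del / (2 * (M + 1)) > 0) by (apply Rdiv_lt_0_compat; lra).
  set (t := Rmin (Rmin 1 T) (del / (2 * (M + 1)))).
  assert (Ht1 : t <= Rmin 1 T) by apply Rmin_l.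
  assert (Htd : t <= del / (2 * (M + 1))) by apply Rmin_r.
  pose proof (Rmin_l 1 T); pose proof (Rmin_r 1 T).
  assert (Ht0 : 0 < t) by (repeat apply Rmin_glb_lt; lra).
  assert (HtM : t * M < del).
  { assert (E : del / (2 * (M + 1)) * (2 * (M + 1)) = del) by (field; lra); nra. }
  set (zt := vadd (vscal t z) (vscal (1 - t) x)).
  assert (Ezt : vsub zt x = vscal t (vsub z x)).
  { apply functional_extensionality; intro i; unfold zt, vsub, vscal, vadd; ring. }
  assert (Hzt : X zt) by (apply HXc; auto; lra).
  exists t; split; [lra | split; [lra | split; [exact Hzt |]]].
  specialize (Hclose zt Hzt).
  rewrite Ezt, vnorm_scal, inner_scal_r in Hclose by lra.
  exact (Hclose HtM).
Qed.

Lemma breg_ge_half_sq n X omega domega x p :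
  convex_set X -> C1_on n X omega domega -> strongly_convex1 n X omega ->
  X x -> X p -> Breg n omega domega x p >= vnorm n (vsub p x) ^ 2 / 2.
Proof.
  intros HXc Hdiff Hsc Hx Hp.
  set (M := vnorm n (vsub p x)).
  assert (HM : 0 <= M) by apply vnorm_nonneg.
  apply (ge_of_forall_eps _ _ (M ^ 2 / 2 + M)); [nra |]; intros eps Heps.
  destruct (C1_along_segment n X omega domega x p eps eps HXc Hdiff Hx Hp Heps Heps)
    as [t [Ht [Hte [_ Hexp]]]].
  apply Rabs_le_bounds, proj1 in Hexp.
  pose proof (Hsc p x t Hp Hx ltac:(lra)) as Hconv; fold M in Hexp, Hconv.
  unfold Breg; fold M.
  set (Q := inner n (domega x) (vsub p x)) in *.
  (* Comparing the expansion with strong convexity at the point x + t (p - x)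
     gives t V(x,p) >= t ((1 - t) M^2/2 - eps M); divide by t and use t <= eps. *)
  assert (Hscaled : t * ((omega p - omega x - Q) - ((1 - t) * M ^ 2 / 2 - eps * M)) >= 0)
    by nra.
  assert ((omega p - omega x - Q) - ((1 - t) * M ^ 2 / 2 - eps * M) >= 0) by nra.
  nra.
Qed.

(** It is the first-order
    optimality condition of the prox problem, combined with the identity
    V(x,z) - V(p,z) - V(x,p) = <grad omega(p) - grad omega(x), z - p>. *)
Lemma prox_three_point n X omega domega x y p z :
  convex_set X -> C1_on n X omega domega -> is_prox n X omega domega x y p -> X z ->
  inner n y p - inner n y z <=
  Breg n omega domega x z - Breg n omega domega p z - Breg n omega domega x p.
Proof.
  intros HXc Hdiff [Hp Hmin] Hz.
  set (M := vnorm n (vsub z p)).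
  assert (HM : 0 <= M) by apply vnorm_nonneg.
  (* First-order optimality of p: <y + grad omega(p) - grad omega(x), z - p> >= 0,
     obtained by comparing the prox objective at p and at p + t (z - p). *)
  assert (Hopt : inner n y z - inner n y p + (inner n (domega p) z - inner n (domega p) p)
                 - (inner n (domega x) z - inner n (domega x) p) >= 0).
  { apply (ge_of_forall_eps _ _ M HM); intros eps Heps.
    destruct (C1_along_segment n X omega domega p z eps 1 HXc Hdiff Hp Hz Heps Rlt_0_1)
      as [t [Ht [_ [Hzt Hexp]]]].
    apply Rabs_le_bounds, proj2 in Hexp; fold M in Hexp.
    specialize (Hmin _ Hzt); unfold Breg in Hmin.
    rewrite !inner_sub_r, !inner_add_r, !inner_scal_r in Hmin.
    rewrite inner_sub_r in Hexp.
    set (Q := inner n y z - inner n y p + (inner n (domega p) z - inner n (domega p) p)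
              - (inner n (domega x) z - inner n (domega x) p)) in *.
    assert (Hscaled : t * (Q + eps * M) >= 0) by (unfold Q; nra).
    destruct (Rge_or_lt (Q + eps * M) 0); nra. }
  unfold Breg; rewrite !inner_sub_r; lra.
Qed.

Lemma prox_step_bound n X omega domega x hk gam p z L :
  convex_set X -> C1_on n X omega domega -> strongly_convex1 n X omega ->
  X x -> is_prox n X omega domega x (vscal gam hk) p -> X z -> vnorm n hk <= L ->
  gam * inner n hk (vsub x z) <=
  Breg n omega domega x z - Breg n omega domega p z + / 2 * (gam ^ 2 * L ^ 2).
Proof.
  intros HXc Hdiff Hsc Hx Hprox Hz HL.
  pose proof (prox_three_point n X omega domega x _ p z HXc Hdiff Hprox Hz) as H3.
  pose proof (breg_ge_half_sq n X omega domega x p HXc Hdiff Hsc Hx (proj1 Hprox)) as Hsep.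
  pose proof (inner_young n (vscal gam hk) (vsub x p)) as Hyoung.
  rewrite vnorm_sub_comm, vnorm_sq in Hsep.
  rewrite !inner_scal_l in H3; rewrite !inner_scal_l, !inner_scal_r in Hyoung.
  rewrite <- vnorm_sq in Hyoung.
  assert (Hh2 : vnorm n hk ^ 2 <= L ^ 2) by (pose proof (vnorm_nonneg n hk); nra).
  (* gam <h, x - z> = gam <h, p - z> + gam <h, x - p>; bound the first term by
     the three-point inequality and the second by Young, whose |x - p|^2 / 2
     is absorbed by V(x,p). *)
  rewrite !inner_sub_r in Hyoung |- *.
  nra.
Qed.

(** Summing the step bounds telescopes the Bregman terms: the regret of
    [m] consecutive mirror-descent steps from index [s] against any z in X. *)
Lemma mirror_descent_regret n X omega domega (x hs : nat -> Vec) (gam L : nat -> R) z :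
  convex_set X -> C1_on n X omega domega -> strongly_convex1 n X omega -> X z ->
  forall m s, X (x s) ->
  (forall k, (s <= k < s + m)%nat ->
     is_prox n X omega domega (x k) (vscal (gam k) (hs k)) (x (S k)) /\ vnorm n (hs k) <= L k) ->
  sumR (seq s m) (fun k => gam k * inner n (hs k) (vsub (x k) z)) <=
  Breg n omega domega (x s) z - Breg n omega domega (x (s + m)%nat) z
  + / 2 * sumR (seq s m) (fun k => gam k ^ 2 * L k ^ 2).
Proof.
  intros HXc Hdiff Hsc Hz m; induction m as [| m IH]; intros s Hxs Hsteps.
  - rewrite Nat.add_0_r; simpl; lra.
  - destruct (Hsteps s ltac:(lia)) as [Hprox HL].
    pose proof (prox_step_bound n X omega domega _ _ _ _ z _ HXc Hdiff Hsc Hxs Hprox Hz HL).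
    specialize (IH (S s) (proj1 Hprox) ltac:(intros k Hk; apply Hsteps; lia)).
    rewrite Nat.add_succ_r in *; simpl in *; lra.
Qed.

Lemma subgrad_gap n X phi x hk z :
  subgrad n X phi x hk -> X z -> phi x - phi z <= inner n hk (vsub x z).
Proof.
  intros Hsub Hz; specialize (Hsub z Hz).
  rewrite inner_sub_r in *; lra.
Qed.

Lemma sumR_cons k l a : sumR (k :: l) a = a k + sumR l a.
Proof. reflexivity. Qed.

Lemma sumR_le l a b : (forall k, In k l -> a k <= b k) -> sumR l a <= sumR l b.
Proof.
  induction l as [| k l IH]; simpl; intros H; [lra |].
  pose proof (H k (or_introl eq_refl)); pose proof (IH (fun j Hj => H j (or_intror Hj))); lra.
Qed.

Lemma sumR_ext_in l a b : (forall k, In k l -> a k = b k) -> sumR l a = sumR l b.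
Proof.
  intros H; apply Rle_antisym; apply sumR_le; intros k Hk; rewrite (H k Hk); lra.
Qed.

Lemma sumR_nonneg l a : (forall k, In k l -> 0 <= a k) -> 0 <= sumR l a.
Proof.
  induction l as [| k l IH]; simpl; intros H; [lra |].
  pose proof (H k (or_introl eq_refl)); pose proof (IH (fun j Hj => H j (or_intror Hj))); lra.
Qed.

Lemma sumR_pos l a : l <> nil -> (forall k, In k l -> 0 < a k) -> 0 < sumR l a.
Proof.
  induction l as [| k l IH]; simpl; intros Hl H; [congruence |].
  pose proof (H k (or_introl eq_refl)).
  destruct l as [| j l]; [simpl; lra |].
  pose proof (IH ltac:(discriminate) (fun i Hi => H i (or_intror Hi))); lra.
Qed.

Lemma sumR_affine l w a c :
  sumR l (fun k => w k * (a k - c)) = sumR l (fun k => w k * a k) - c * sumR l w.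
Proof. induction l as [| k l IH]; simpl; [ring | rewrite IH; ring]. Qed.

Lemma sumR_filter_if (p : nat -> bool) l a b :
  sumR l (fun k => if p k then a k else b k) =
  sumR (filter p l) a + sumR (filter (fun k => negb (p k)) l) b.
Proof. induction l as [| k l IH]; simpl; [ring | destruct (p k); simpl; rewrite IH; ring]. Qed.

Lemma length_filter_split (p : nat -> bool) l :
  length l = (length (filter p l) + length (filter (fun k => negb (p k)) l))%nat.
Proof. induction l as [| k l IH]; simpl; [lia | destruct (p k); simpl; lia]. Qed.

Lemma ominR_none l a : ominR l a = None -> l = nil.
Proof. destruct l as [| k l]; simpl; [auto | destruct (ominR l a); discriminate]. Qed.

Lemma ominR_count_bound l a m :
  ominR l a = Some m -> (forall k, In k l -> 0 < a k) ->
  0 < m /\ INR (length l) * m <= sumR l a.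
Proof.
  revert m; induction l as [| k l IH]; intros m Hm Hpos; [discriminate |].
  change (INR (length (k :: l))) with (INR (S (length l))).
  rewrite sumR_cons; simpl in Hm.
  pose proof (Hpos k (or_introl eq_refl)) as Hk.
  destruct (ominR l a) as [m' |] eqn:E; injection Hm as <-.
  - destruct (IH m' eq_refl (fun j Hj => Hpos j (or_intror Hj))) as [Hm' Hsum].
    rewrite S_INR; pose proof (Rmin_l (a k) m'); pose proof (Rmin_r (a k) m').
    pose proof (pos_INR (length l)).
    split; [apply Rmin_glb_lt; lra | nra].
  - rewrite (ominR_none l a E); simpl; lra.
Qed.

Lemma sum_exceeds_of_min l w K Rb :
  0 <= K -> (forall k, In k l -> 0 < w k) ->
  match ominR l w with None => True | Some m => K / 2 * m > Rb end ->
  K < 2 * INR (length l) -> Rb < sumR l w.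
Proof.
  intros HK Hpos Hcond Hlen.
  destruct (ominR l w) as [m |] eqn:E.
  - destruct (ominR_count_bound l w m E Hpos); nra.
  - rewrite (ominR_none l w E) in Hlen; simpl in Hlen; lra.
Qed.

Definition wavg (l : list nat) (w : nat -> R) (x : nat -> Vec) : Vec :=
  fun i => sumR l (fun k => w k * x k i) / sumR l w.

Lemma jensen_wavg X phi w x l :
  convex_set X -> convex_on X phi -> l <> nil ->
  (forall k, In k l -> X (x k) /\ 0 < w k) ->
  X (wavg l w x) /\ phi (wavg l w x) <= sumR l (fun k => w k * phi (x k)) / sumR l w.
Proof.
  intros HXc Hphi; induction l as [| a l IH]; intros Hl H; [congruence |].
  destruct (H a (or_introl eq_refl)) as [Hxa Hwa].
  destruct l as [| b l].
  - assert (E : wavg (a :: nil) w x = x a).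
    { apply functional_extensionality; intro i; unfold wavg; simpl; field; lra. }
    rewrite E; split; [exact Hxa | simpl; right; field; lra].
  - set (L := b :: l) in *.
    destruct (IH ltac:(discriminate) (fun k Hk => H k (or_intror Hk))) as [HXL HphiL].
    assert (HS : 0 < sumR L w).
    { apply sumR_pos; [discriminate |]; intros k Hk; apply (H k (or_intror Hk)). }
    set (S := sumR L w) in *.
    (* The average over [a :: L] is a convex combination of [x a] and the
       average over [L], with coefficient [t] on [x a]. *)
    set (t := w a / (w a + S)).
    assert (E : wavg (a :: L) w x = vadd (vscal t (x a)) (vscal (1 - t) (wavg L w x))).
    { apply functional_extensionality; intro i; unfold vadd, vscal, wavg, t.
      rewrite !sumR_cons; fold S; field; lra. }
    assert (Ht : 0 <= t <= 1).
    { unfold t; split; [apply Rlt_le, Rdiv_lt_0_compat; lra |].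
      apply (Rmult_le_reg_r (w a + S)); [lra |]; field_simplify; lra. }
    assert (E1 : 1 - t = S / (w a + S)) by (unfold t; field; lra).
    rewrite E; split; [apply HXc; auto |].
    eapply Rle_trans; [apply Hphi; auto |].
    apply Rle_trans with (t * phi (x a) + (1 - t) * (sumR L (fun k => w k * phi (x k)) / S)).
    + apply Rplus_le_compat_l, Rmult_le_compat_l; lra.
    + rewrite !sumR_cons; fold S; rewrite E1; unfold t; right; field; lra.
Qed.

Lemma mean_gap_bound F Rb S mB K (nB : nat) :
  0 < mB -> 0 < K -> INR nB * mB <= S -> 0 < S -> F <= Rb -> 0 <= Rb ->
  (K <= 2 * INR nB \/ F < 0) -> F / S <= 2 * Rb / (K * mB).
Proof.
  intros HmB HK HnS HS HF HR Hcase.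
  assert (Hrhs : 0 <= 2 * Rb / (K * mB))
    by (apply Rmult_le_pos; [lra | apply Rlt_le, Rinv_0_lt_compat, Rmult_lt_0_compat; lra]).
  destruct Hcase as [Hhalf | Hneg].
  - apply Rle_trans with (Rb / S).
    { apply Rmult_le_compat_r; [apply Rlt_le, Rinv_0_lt_compat |]; lra. }
    assert (E : 2 * Rb / (K * mB) - Rb / S = Rb * (2 * S - K * mB) / (S * (K * mB)))
      by (field; split; lra).
    assert (K * mB <= 2 * INR nB * mB) by (apply Rmult_le_compat_r; lra).
    assert (0 <= Rb * (2 * S - K * mB) / (S * (K * mB))).
    { apply Rmult_le_pos; [apply Rmult_le_pos; lra |].
      apply Rlt_le, Rinv_0_lt_compat, Rmult_lt_0_compat; [lra | apply Rmult_lt_0_compat; lra]. }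
    lra.
  - assert (F / S < 0) by (apply Rdiv_neg_pos; lra); lra.
Qed.

(** Only the parts of the
    setting used by the argument are assumed; compactness and Lipschitz
    continuity enter solely through the given bounds on the cuts [h k]. *)
Section InexactCSA.

Variables (n : nat) (X Delta : Vec -> Prop) (f : Vec -> R) (g : Vec -> Vec -> R)
  (Lf LgX : R) (G : Vec -> R) (xstar : Vec) (omega : Vec -> R) (domega : Vec -> Vec)
  (DX : R) (N s : nat) (gamma eta : nat -> R) (x dl h : nat -> Vec).

(** [cut k] is the test [g(x_k, delta_k) <= eta_k] deciding whether step [k]
    is an objective step (in B) or a constraint step (in N). *)
Variable cut : nat -> bool.

Hypothesis HXconv : convex_set X.
Hypothesis Hfconv : convex_on X f.
Hypothesis Hgconv : forall dd, Delta dd -> convex_on X (fun y => g y dd).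
Hypothesis HG : forall y, X y -> is_max_on Delta (fun dd => g y dd) (G y).
Hypothesis Hxstar : X xstar.
Hypothesis HGxstar : G xstar <= 0.
Hypothesis Homega : C1_on n X omega domega.
Hypothesis Homsc : strongly_convex1 n X omega.
Hypothesis HDX : forall u v, X u -> X v -> Breg n omega domega u v <= DX ^ 2.
Hypothesis Hx1 : X (x 1%nat).
Hypothesis Heta : forall k, (1 <= k <= N)%nat -> eta k > 0.
Hypothesis Hgamma : forall k, (1 <= k <= N)%nat -> gamma k > 0.
Hypothesis Hdl : forall k, (1 <= k <= N)%nat -> Delta (dl k).
Hypothesis Hcut_true : forall k, cut k = true -> g (x k) (dl k) <= eta k.
Hypothesis Hcut_false : forall k, cut k = false -> eta k < g (x k) (dl k).
Hypothesis Hh : forall k, (1 <= k <= N)%nat ->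
  if cut k
  then subgrad n X f (x k) (h k) /\ vnorm n (h k) <= Lf
  else subgrad n X (fun y => g y (dl k)) (x k) (h k) /\ vnorm n (h k) <= LgX.
Hypothesis Hstep : forall k, (1 <= k <= N)%nat ->
  is_prox n X omega domega (x k) (vscal (gamma k) (h k)) (x (S k)).
Hypothesis Hs : (1 <= s <= N)%nat.

Local Notation I := (Iset s N).
Local Notation Bs := (filter cut I).
Local Notation Ns := (filter (fun k => negb (cut k)) I).
Local Notation RHS := (DX ^ 2 + / 2 * sumR Bs (fun k => gamma k ^ 2 * Lf ^ 2)
                        + / 2 * sumR Ns (fun k => gamma k ^ 2 * LgX ^ 2)).

Hypothesis Hstepsizes :
  match ominR Ns (fun k => gamma k * eta k) with
  | None => True
  | Some m => INR (N - s + 1) / 2 * m > RHS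
  end.

Lemma in_I k : In k I -> (1 <= k <= N)%nat.
Proof. unfold Iset; rewrite in_seq; lia. Qed.

Lemma length_I : length I = (N - s + 1)%nat.
Proof. apply length_seq. Qed.

Lemma in_Bs k : In k Bs -> (1 <= k <= N)%nat /\ cut k = true.
Proof. rewrite filter_In; intros [Hk Hc]; auto using in_I. Qed.

Lemma in_Ns k : In k Ns -> (1 <= k <= N)%nat /\ cut k = false.
Proof. rewrite filter_In; intros [Hk Hc]; split; [auto using in_I | now destruct (cut k)]. Qed.

Lemma iterates_in_X k : (1 <= k <= S N)%nat -> X (x k).
Proof.
  destruct k as [| k]; intros Hk; [lia |].
  destruct k as [| k]; [exact Hx1 | apply (Hstep (S k) ltac:(lia))].
Qed.

Lemma regret_bound :
  sumR I (fun k => gamma k * inner n (h k) (vsub (x k) xstar)) <= RHS.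
Proof.
  set (L := fun k => if cut k then Lf else LgX).
  assert (Hsteps : forall k, (s <= k < s + (N - s + 1))%nat ->
            is_prox n X omega domega (x k) (vscal (gamma k) (h k)) (x (S k))
            /\ vnorm n (h k) <= L k).
  { intros k Hk; split; [apply Hstep; lia |].
    pose proof (Hh k ltac:(lia)); unfold L; destruct (cut k); tauto. }
  pose proof (mirror_descent_regret n X omega domega x h gamma L xstar
                HXconv Homega Homsc Hxstar (N - s + 1) s (iterates_in_X s ltac:(lia)) Hsteps)
    as Hreg.
  assert (Hstart : Breg n omega domega (x s) xstar <= DX ^ 2)
    by (apply HDX; [apply iterates_in_X; lia | exact Hxstar]).
  assert (Hend : Breg n omega domega (x (s + (N - s + 1))%nat) xstar >= 0).
  { eapply Rge_trans; [apply (breg_ge_half_sq n X); auto; apply iterates_in_X; lia |].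
    pose proof (pow2_ge_0 (vnorm n (vsub xstar (x (s + (N - s + 1))%nat)))); lra. }
  assert (Hcosts : sumR I (fun k => gamma k ^ 2 * L k ^ 2) =
                   sumR Bs (fun k => gamma k ^ 2 * Lf ^ 2)
                   + sumR Ns (fun k => gamma k ^ 2 * LgX ^ 2)).
  { rewrite <- sumR_filter_if; apply sumR_ext_in; intros k _; unfold L; now destruct (cut k). }
  change (seq s (N - s + 1)) with I in Hreg; lra.
Qed.

(** Each objective step contributes at least its weighted optimality gap and
    each constraint step at least [gamma_k eta_k] to the regret, because
    g(xstar, delta_k) <= G(xstar) <= 0 < eta_k < g(x_k, delta_k). *)
Lemma step_budget :
  sumR Bs (fun k => gamma k * (f (x k) - f xstar)) + sumR Ns (fun k => gamma k * eta k)
  <= RHS.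
Proof.
  rewrite <- sumR_filter_if.
  eapply Rle_trans; [| apply regret_bound]; apply sumR_le; intros k Hk.
  pose proof (in_I k Hk) as HkN; pose proof (Hgamma k HkN); pose proof (Hh k HkN) as Hhk.
  destruct (cut k) eqn:Hc; destruct Hhk as [Hsub _];
    pose proof (subgrad_gap n X _ _ _ _ Hsub Hxstar); simpl in *.
  - apply Rmult_le_compat_l; lra.
  - pose proof (Hcut_false k Hc); pose proof (proj2 (HG xstar Hxstar) (dl k) (Hdl k HkN)).
    simpl in *; apply Rmult_le_compat_l; lra.
Qed.

Lemma constraint_steps_exceed :
  INR (N - s + 1) < 2 * INR (length Ns) -> RHS < sumR Ns (fun k => gamma k * eta k).
Proof.
  intros Hmany; apply sum_exceeds_of_min with (K := INR (N - s + 1)); auto using pos_INR.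
  intros k Hk; destruct (in_Ns k Hk) as [HkN _].
  pose proof (Hgamma k HkN); pose proof (Heta k HkN); nra.
Qed.

Lemma objective_steps_nonempty : Bs <> nil.
Proof.
  intros Hnil.
  pose proof step_budget as Hbudget.
  assert (HF : sumR Bs (fun k => gamma k * (f (x k) - f xstar)) = 0) by (rewrite Hnil; reflexivity).
  pose proof (length_filter_split cut I) as Hlen; rewrite Hnil, length_I in Hlen; simpl in Hlen.
  assert (HK : 1 <= INR (N - s + 1)) by (apply (le_INR 1); lia).
  pose proof (constraint_steps_exceed ltac:(rewrite <- Hlen; lra)); lra.
Qed.

Lemma objective_steps_weights k : In k Bs -> X (x k) /\ 0 < gamma k.
Proof.
  intros Hk; destruct (in_Bs k Hk) as [HkN _].
  split; [apply iterates_in_X; lia | apply Hgamma, HkN].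
Qed.

Lemma sumR_gamma_Bs_pos : 0 < sumR Bs gamma.
Proof. apply sumR_pos; [exact objective_steps_nonempty | apply objective_steps_weights]. Qed.

Lemma objective_bound :
  match ominR Bs gamma with
  | None => False
  | Some mB =>
      f (wavg Bs gamma x) - f xstar <=
        (2 * DX ^ 2 + sumR Bs (fun k => gamma k ^ 2 * Lf ^ 2)
                    + sumR Ns (fun k => gamma k ^ 2 * LgX ^ 2))
        / (INR (N - s + 1) * mB)
  end.
Proof.
  destruct (ominR Bs gamma) as [mB |] eqn:E;
    [| exact (objective_steps_nonempty (ominR_none _ _ E))].
  destruct (ominR_count_bound _ _ _ E (fun k Hk => proj2 (objective_steps_weights k Hk)))
    as [HmB HcountB].
  destruct (jensen_wavg X f gamma x Bs HXconv Hfconv objective_steps_nonempty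
              objective_steps_weights) as [_ Hjensen].
  pose proof sumR_gamma_Bs_pos as HSB.
  set (F := sumR Bs (fun k => gamma k * (f (x k) - f xstar))).
  set (T := sumR Ns (fun k => gamma k * eta k)).
  assert (Hgap : f (wavg Bs gamma x) - f xstar <= F / sumR Bs gamma).
  { unfold F; rewrite sumR_affine.
    replace ((sumR Bs (fun k => gamma k * f (x k)) - f xstar * sumR Bs gamma) / sumR Bs gamma)
      with (sumR Bs (fun k => gamma k * f (x k)) / sumR Bs gamma - f xstar) by (field; lra).
    lra. }
  assert (HT : 0 <= T).
  { apply sumR_nonneg; intros k Hk; destruct (in_Ns k Hk) as [HkN _].
    pose proof (Hgamma k HkN); pose proof (Heta k HkN); nra. }
  assert (HR : 0 <= RHS).
  { assert (Hsq : forall l c, 0 <= sumR l (fun k => gamma k ^ 2 * c ^ 2)).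
    { intros l c; apply sumR_nonneg; intros; apply Rmult_le_pos; apply pow2_ge_0. }
    pose proof (Hsq Bs Lf); pose proof (Hsq Ns LgX); pose proof (pow2_ge_0 DX); lra. }
  assert (HK : 1 <= INR (N - s + 1)) by (apply (le_INR 1); lia).
  pose proof step_budget as Hbudget; fold F T in Hbudget.
  replace (2 * DX ^ 2 + _ + _) with (2 * RHS) by field.
  eapply Rle_trans; [exact Hgap |].
  apply (mean_gap_bound F RHS _ mB _ (length Bs)); auto; try lra.
  (* Either B holds half of the steps, or the constraint steps dominate,
     their weight exceeds RHS and the objective gaps sum to [F < 0]. *)
  destruct (Rle_or_lt (INR (N - s + 1)) (2 * INR (length Bs))) as [Hhalf | Hfew]; [now left |].
  right.
  pose proof (length_filter_split cut I) as Hlen; rewrite length_I in Hlen.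
  rewrite Hlen, plus_INR in Hfew.
  assert (Hmany : INR (N - s + 1) < 2 * INR (length Ns)) by (rewrite Hlen, plus_INR; lra).
  pose proof (constraint_steps_exceed Hmany) as Hexceed; fold T in Hexceed; lra.
Qed.

(** Constraint violation of the output: with dstar a maximizer of
    g(xbar, .), Jensen gives G(xbar) <= mean of g(x_k, dstar) and
    g(x_k, dstar) <= G(x_k) = g(x_k, delta_k) + eps_k <= eta_k + eps_k on B. *)
Lemma constraint_bound :
  G (wavg Bs gamma x) <=
  sumR Bs (fun k => gamma k * (eta k + (G (x k) - g (x k) (dl k)))) / sumR Bs gamma.
Proof.
  destruct (jensen_wavg X f gamma x Bs HXconv Hfconv objective_steps_nonempty
              objective_steps_weights) as [Hxbar _].
  destruct (HG _ Hxbar) as [[dstar [Hdstar Hattained]] _]; simpl in Hattained.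
  rewrite <- Hattained.
  destruct (jensen_wavg X (fun y => g y dstar) gamma x Bs HXconv (Hgconv dstar Hdstar)
              objective_steps_nonempty objective_steps_weights) as [_ Hjensen].
  eapply Rle_trans; [exact Hjensen |].
  apply Rmult_le_compat_r; [apply Rlt_le, Rinv_0_lt_compat, sumR_gamma_Bs_pos |].
  apply sumR_le; intros k Hk; destruct (in_Bs k Hk) as [HkN Hc].
  pose proof (Hcut_true k Hc); pose proof (Hgamma k HkN).
  pose proof (proj2 (HG (x k) (iterates_in_X k ltac:(lia))) dstar Hdstar); simpl in *.
  apply Rmult_le_compat_l; lra.
Qed.

End InexactCSA.
Theorem mainTheorem17
  (n d : nat) (X : Vec -> Prop) (Delta : Vec -> Prop)
  (f : Vec -> R) (g : Vec -> Vec -> R) (Lf LgX LgD : R)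
  (G : Vec -> R) (xstar : Vec)
  (omega : Vec -> R) (domega : Vec -> Vec) (DX : R)
  (N s : nat) (gamma eta : nat -> R)
  (x : nat -> Vec) (dl : nat -> Vec) (h : nat -> Vec)
  (* setting *)
  (HXconv : convex_set X) (HXcomp : compact_set n X)
  (HDcomp : compact_set d Delta)
  (Hfconv : convex_on X f) (Hflip : lipschitz_on n X Lf f)
  (Hgconv : forall dd, Delta dd -> convex_on X (fun y => g y dd))
  (HgXlip : forall dd, Delta dd -> lipschitz_on n X LgX (fun y => g y dd))
  (HgDlip : forall y, X y -> lipschitz_on d Delta LgD (fun dd => g y dd))
  (HG : forall y, X y -> is_max_on Delta (fun dd => g y dd) (G y))
  (Hxstar : X xstar /\ G xstar <= 0 /\ forall y, X y -> G y <= 0 -> f xstar <= f y)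
  (Homega : C1_on n X omega domega) (Homsc : strongly_convex1 n X omega)
  (HDX : 0 <= DX /\ is_max_on (fun p => X (fst p) /\ X (snd p))
                     (fun p => Breg n omega domega (fst p) (snd p)) (DX ^ 2))
  (* algorithm *)
  (HN : (1 <= N)%nat) (Hx1 : X (x 1%nat))
  (Heta : forall k, (1 <= k <= N)%nat -> eta k > 0)
  (Hgamma : forall k, (1 <= k <= N)%nat -> gamma k > 0)
  (Hdl : forall k, (1 <= k <= N)%nat -> Delta (dl k))
  (Hh : forall k, (1 <= k <= N)%nat ->
     if Rleb (g (x k) (dl k)) (eta k)
     then subgrad n X f (x k) (h k) /\ vnorm n (h k) <= Lf
     else subgrad n X (fun y => g y (dl k)) (x k) (h k) /\ vnorm n (h k) <= LgX)
  (Hstep : forall k, (1 <= k <= N)%nat ->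
     is_prox n X omega domega (x k) (vscal (gamma k) (h k)) (x (S k)))
  (Hs : (1 <= s <= N)%nat) :
  let B := filter (fun k => Rleb (g (x k) (dl k)) (eta k)) (Iset s N) in
  let NN := filter (fun k => negb (Rleb (g (x k) (dl k)) (eta k))) (Iset s N) in
  let eps := fun k => G (x k) - g (x k) (dl k) in
  let xbar : Vec := fun i => sumR B (fun k => gamma k * x k i) / sumR B gamma in
  let RHS := DX ^ 2 + / 2 * sumR B (fun k => gamma k ^ 2 * Lf ^ 2)
                    + / 2 * sumR NN (fun k => gamma k ^ 2 * LgX ^ 2) in
  (match ominR NN (fun k => gamma k * eta k) with
   | None => True
   | Some m => INR (N - s + 1) / 2 * m > RHS
   end) ->
  B <> nil /\
  (match ominR B gamma with
   | None => False
   | Some mB =>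
       f xbar - f xstar <=
         (2 * DX ^ 2 + sumR B (fun k => gamma k ^ 2 * Lf ^ 2)
                     + sumR NN (fun k => gamma k ^ 2 * LgX ^ 2))
         / (INR (N - s + 1) * mB)
   end) /\
  G xbar <= sumR B (fun k => gamma k * (eta k + eps k)) / sumR B gamma.
Proof.
  intros B NN eps xbar RHS Hcond.
  destruct Hxstar as [Hxs [HGxs _]].
  assert (HDXmax : forall u v, X u -> X v -> Breg n omega domega u v <= DX ^ 2)
    by (intros u v Hu Hv; apply (proj2 (proj2 HDX) (u, v)); split; assumption).
  pose (cut := fun k => Rleb (g (x k) (dl k)) (eta k)).
  assert (Hcut_true : forall k, cut k = true -> g (x k) (dl k) <= eta k)
    by (intros k; unfold cut, Rleb; destruct Rle_dec; congruence).
  assert (Hcut_false : forall k, cut k = false -> eta k < g (x k) (dl k))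
    by (intros k; unfold cut, Rleb; destruct Rle_dec; [discriminate | lra]).
  split; [| split].
  - eapply objective_steps_nonempty with (xstar := xstar) (eta := eta) (cut := cut); eassumption.
  - eapply objective_bound with (xstar := xstar) (eta := eta) (cut := cut); eassumption.
  - eapply constraint_bound with (xstar := xstar) (eta := eta) (cut := cut); eassumption.
Qed.
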